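(* For every integer $\nu \ge 0$ the following identities hold: \[ \sum_{k=0}^{2\nu} (-1)^{k}\, \binom{2\nu+2}{k+2}\, 2^{-k}\, \binom{2k}{k}=\frac{1}{3}(4\nu+3)\,\frac{(\frac{3}{2})_{\nu}}{(1)_{\nu}}, \qquad \sum_{k=0}^{2\nu+1} (-1)^{k} \,\binom{2\nu+3}{k+2} \,2^{-k} \,\binom{2k}{k}=2\,\frac{(\frac{5}{2})_{\nu}}{(1)_{\nu}}, \] \[ \sum_{k=0}^{2\nu} (-1)^{k}\, \binom{2\nu+3}{k+3}\, 2^{-k}\, \binom{2k}{k}=\frac{1}{5}(8\nu+5)\,\frac{(\frac{5}{2})_{\nu}}{(1)_{\nu}}, \qquad \sum_{k=0}^{2\nu+1} (-1)^{k} \,\binom{2\nu+4}{k+3} \,2^{-k} \,\binom{2k}{k}=\frac{1}{5}(8\nu+15)\,\frac{(\frac{5}{2})_{\nu}}{(1)_{\nu}}. \]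
   Context: For a complex number $a$ and integer $n\ge 0$, $(a)_n$ denotes the Pochhammer symbol: $(a)_0=1$ and $(a)_n=a(a+1)\cdots(a+n-1)$ for $n\ge1$; in particular $(1)_\nu=\nu!$. *)

From mathcomp Require Import all_boot all_order all_algebra.
Set Implicit Arguments. Unset Strict Implicit. Unset Printing Implicit Defensive.
Import Order.TTheory GRing.Theory Num.Theory.
Local Open Scope ring_scope.

Definition poch {R : nzRingType} (a : R) (n : nat) : R :=
  \prod_(i < n) (a + i%:R).

(* Let t_k = (-1/2)^k C(2k, k), the coefficients of (1 + 2x)^(-1/2), and
   S_m(n) = sum_k C(n, k + m) t_k.  S_0 is the binomial transform of t, whose
   generating function is (1 - x^2)^(-1/2): so S_0(2i) = (1/2)_i / i! and
   S_0(2i + 1) = 0, which we obtain from the recurrence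
   (n + 2) S_0(n + 2) = (n + 1) S_0(n).  Pascal's rule makes S_{m+1} the
   sequence of partial sums of S_m; summing S_m over consecutive pairs of
   indices and using sum_(i <= n) (a)_i / i! = (a + 1)_n / n! lifts the closed
   forms from m = 0 to m = 1, 2, 3. *)

From mathcomp Require Import all_boot all_order all_algebra.
From mathcomp Require Import ring zify.

Set Implicit Arguments.
Unset Strict Implicit.
Unset Printing Implicit Defensive.
Import Order.TTheory GRing.Theory Num.Theory.
Local Open Scope ring_scope.

Section Pochhammer.
Variable R : nzRingType.

Lemma poch0 (a : R) : poch a 0 = 1.
Proof. by rewrite /poch big_ord0. Qed.

Lemma pochS (a : R) n : poch a n.+1 = poch a n * (a + n%:R).
Proof. by rewrite /poch big_ord_recr. Qed.

Lemma pochSl (a : R) n : poch a n.+1 = a * poch (a + 1) n.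
Proof.
rewrite /poch big_ord_recl addr0; congr (_ * _).
by apply: eq_bigr => i _; rewrite lift0 -addrA nat1r.
Qed.

Lemma poch1_fact n : poch (1 : R) n = n`!%:R.
Proof.
elim: n => [|n IHn]; first by rewrite poch0.
by rewrite pochS IHn factS nat1r -natrM mulnC.
Qed.

End Pochhammer.

Section Multichoose.
Variable R : numFieldType.

Definition multichoose (a : R) n := poch a n / poch 1 n.

Lemma fact_neq0 n : n`!%:R != 0 :> R.
Proof. by rewrite pnatr_eq0 -lt0n fact_gt0. Qed.

Lemma multichoose0 (a : R) : multichoose a 0 = 1.
Proof. by rewrite /multichoose !poch0 divr1. Qed.

Lemma multichooseS (a : R) n :
  multichoose a n.+1 = (a + n%:R) / n.+1%:R * multichoose a n.
Proof.
rewrite /multichoose !poch1_fact pochS factS natrM.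
by field; rewrite fact_neq0 nat1r pnatr_eq0.
Qed.

Lemma multichoose_shift (a : R) n : a != 0 ->
  multichoose (a + 1) n = (a + n%:R) / a * multichoose a n.
Proof.
move=> a_neq0; apply: (mulfI a_neq0).
rewrite /multichoose !poch1_fact mulrA -pochSl pochS.
by field; rewrite a_neq0 fact_neq0.
Qed.

Lemma multichoose_pascal (a : R) n :
  multichoose (a + 1) n.+1 = multichoose (a + 1) n + multichoose a n.+1.
Proof.
rewrite /multichoose !poch1_fact pochS pochSl factS natrM.
by field; rewrite fact_neq0 nat1r pnatr_eq0.
Qed.

Lemma sum_multichoose (a : R) n :
  \sum_(i < n.+1) multichoose a i = multichoose (a + 1) n.
Proof.
elim: n => [|n IHn]; first by rewrite big_ord1 !multichoose0.
by rewrite big_ord_recr IHn /= multichoose_pascal.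
Qed.

End Multichoose.

Lemma big_ord_trunc (V : nmodType) (F : nat -> V) n N :
  (forall k, (n <= k)%N -> F k = 0) -> (n <= N)%N ->
  \sum_(k < N) F k = \sum_(k < n) F k.
Proof.
move=> F0 leN; rewrite [RHS](big_ord_widen _ F leN) [RHS]big_mkcond /=.
by apply: eq_bigr => k _; case: ltnP => // /F0.
Qed.

Lemma sum_pairs (V : nmodType) (F : nat -> V) n :
  \sum_(j < 2 * n) F j = \sum_(i < n) (F (2 * i)%N + F (2 * i).+1).
Proof.
elim: n => [|n IHn]; first by rewrite !big_ord0.
by rewrite mulnS !big_ord_recr IHn /= -addrA.
Qed.

Lemma mul_bin_central k :
  (k.+1 * 'C(2 * k.+1, k.+1) = 2 * (2 * k).+1 * 'C(2 * k, k))%N.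
Proof.
have := mul_bin_down (2 * k).+1 k.
rewrite /= (_ : (2 * k).+1 - k = k.+1)%N => [down|]; last by lia.
by rewrite -mul_bin_diag mulnS add2n /= -mulnA down mulnA mulnS add2n.
Qed.

Lemma mul_bin_SS n k : (n.+2 * 'C(n.+2, k)
  = n.+1 * 'C(n, k) + (2 * k).+1 * 'C(n.+1, k) + k * 'C(n.+1, k.-1))%N.
Proof.
case: k => [|[|k]]; first by rewrite !bin0; lia.
  by rewrite !bin1 bin0; lia.
have h1 := mul_bin_left n k; have h2 := mul_bin_left n k.+1.
rewrite !binS; case: (leqP k n) => [le_kn|lt_nk]; first by nia.
by rewrite !bin_small //; lia.
Qed.

Section BinomialSums.
Variable R : numFieldType.

Definition sqrt_coef k : R := (-1) ^+ k * 2 ^- k * 'C(2 * k, k)%:R.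

Lemma sqrt_coefS k : k.+1%:R * sqrt_coef k.+1 = - (2 * k).+1%:R * sqrt_coef k.
Proof.
rewrite /sqrt_coef mulrCA -natrM mul_bin_central !natrM !exprS.
by field; rewrite expf_neq0 // pnatr_eq0.
Qed.

Definition binsum m n : R := \sum_(k < n.+1) 'C(n, k + m)%:R * sqrt_coef k.

Lemma binsum_trunc N m n : (n < N + m)%N ->
  \sum_(k < N) 'C(n, k + m)%:R * sqrt_coef k = binsum m n.
Proof.
have F0 k : (n.+1 - m <= k)%N -> 'C(n, k + m)%:R * sqrt_coef k = 0.
  by move=> le_k; rewrite bin_small ?mul0r //; lia.
move=> lt_n; rewrite /binsum (big_ord_trunc F0); last by lia.
by rewrite [RHS](big_ord_trunc F0) //; lia.
Qed.

Lemma binsumE N m n : (n < N + m)%N ->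
  \sum_(k < N) (-1) ^+ k * 'C(n, k + m)%:R * 2 ^- k * 'C(2 * k, k)%:R = binsum m n.
Proof.
move=> lt_n; rewrite -(binsum_trunc lt_n); apply: eq_bigr => k _.
by rewrite /sqrt_coef; ring.
Qed.

Lemma binsum_small m n : (n < m)%N -> binsum m n = 0.
Proof. by move=> lt_nm; rewrite -(binsum_trunc (N := 0)) ?big_ord0. Qed.

Lemma binsum_pascal m n : binsum m.+1 n.+1 = binsum m.+1 n + binsum m n.
Proof.
rewrite -!(binsum_trunc (N := n.+2)) -?big_split; try lia.
by apply: eq_bigr => k _; rewrite addnS binS natrD mulrDl.
Qed.

Lemma binsum_partial_sum m n : binsum m.+1 (n + m) = \sum_(j < n) binsum m (j + m).
Proof.
elim: n => [|n IHn]; first by rewrite big_ord0 binsum_small.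
by rewrite addSn binsum_pascal IHn big_ord_recr.
Qed.

Lemma binsum_pair_sum m n : binsum m.+1 (2 * n + m)
  = \sum_(i < n) (binsum m (2 * i + m) + binsum m ((2 * i).+1 + m)).
Proof. by rewrite binsum_partial_sum (sum_pairs (fun j => binsum m (j + m))). Qed.

Lemma binsum0_rec n : n.+2%:R * binsum 0 n.+2 = n.+1%:R * binsum 0 n.
Proof.
(* By sqrt_coefS and mul_bin_SS, the summands of the difference telescope. *)
pose G k := - (k%:R * 'C(n.+1, k.-1)%:R * sqrt_coef k).
have step k : n.+2%:R * ('C(n.+2, k + 0)%:R * sqrt_coef k)
    - n.+1%:R * ('C(n, k + 0)%:R * sqrt_coef k) = G k.+1 - G k.
  have bin_rec : n.+2%:R * 'C(n.+2, k)%:R = n.+1%:R * 'C(n, k)%:R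
      + (2 * k).+1%:R * 'C(n.+1, k)%:R + k%:R * 'C(n.+1, k.-1)%:R :> R.
    by rewrite -!natrM -!natrD mul_bin_SS.
  rewrite /G /= mulrAC sqrt_coefS !addn0.
  transitivity ((n.+2%:R * 'C(n.+2, k)%:R - n.+1%:R * 'C(n, k)%:R) * sqrt_coef k); first by ring.
  by rewrite bin_rec; ring.
apply/eqP; rewrite -subr_eq0 -!(binsum_trunc (N := n.+3)) ?addn0 ?ltnS ?leqW //.
rewrite !mulr_sumr -sumrB; under eq_bigr do rewrite step.
rewrite -(big_mkord xpredT (fun k => G k.+1 - G k)).
by rewrite telescope_sumr // /G /= bin_small // !(mul0r, mulr0) oppr0 subr0.
Qed.

Lemma half_shift k : k.+2%:R / 2 = k%:R / 2 + 1 :> R.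
Proof. by rewrite -addn2 natrD mulrDl divff // pnatr_eq0. Qed.

Lemma half_neq0 k : k.+1%:R / 2 != 0 :> R.
Proof. by rewrite mulf_neq0 ?invr_eq0 ?pnatr_eq0. Qed.

Lemma binsum0_odd n : binsum 0 (2 * n).+1 = 0.
Proof.
elim: n => [|n IHn].
  rewrite muln0 /binsum !big_ord_recr big_ord0 /sqrt_coef /= !addn0 !muln0 muln1.
  by rewrite !bin0 binn bin1 !expr0 !expr1; field.
rewrite mulnS add2n; have := binsum0_rec (2 * n).+1; rewrite IHn mulr0 => /eqP.
by rewrite mulf_eq0 pnatr_eq0 => /eqP.
Qed.

Lemma binsum0_even n : binsum 0 (2 * n) = multichoose (1 / 2) n.
Proof.
elim: n => [|n IHn].
  by rewrite multichoose0 /binsum big_ord1 /sqrt_coef /= !bin0 !expr0 divr1 !mulr1.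
apply: (@mulfI _ (2 * n).+2%:R); first by rewrite pnatr_eq0.
rewrite mulnS add2n binsum0_rec IHn multichooseS.
by field; rewrite nat1r pnatr_eq0.
Qed.

Lemma binsum1_even n : binsum 1 (2 * n).+2 = multichoose (3 / 2) n.
Proof.
rewrite (_ : (2 * n).+2 = 2 * n.+1 + 0)%N; last by rewrite addn0 mulnS.
rewrite binsum_pair_sum (half_shift 1) -sum_multichoose.
by apply: eq_bigr => i _; rewrite !addn0 binsum0_even binsum0_odd addr0.
Qed.

Lemma binsum1_odd n : binsum 1 (2 * n).+1 = multichoose (3 / 2) n.
Proof. by rewrite -binsum1_even (binsum_pascal 0 (2 * n).+1) binsum0_odd addr0. Qed.

Lemma binsum2_odd n : binsum 2 (2 * n).+3 = 2 * multichoose (5 / 2) n.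
Proof.
rewrite (_ : (2 * n).+3 = 2 * n.+1 + 1)%N; last by rewrite addn1 mulnS.
rewrite binsum_pair_sum (half_shift 3) -sum_multichoose mulr_sumr.
by apply: eq_bigr => i _; rewrite !addn1 binsum1_odd binsum1_even [RHS]mulr_natl mulr2n.
Qed.

Lemma binsum2_even n :
  binsum 2 (2 * n).+2 = 3^-1 * (4 * n + 3)%:R * multichoose (3 / 2) n.
Proof.
have pascal := binsum_pascal 1 (2 * n).+2.
rewrite binsum2_odd binsum1_even (half_shift 3) (multichoose_shift _ (half_neq0 2)) in pascal.
by apply: (addIr (multichoose (3 / 2) n)); rewrite -pascal; field.
Qed.

Lemma binsum3_even n :
  binsum 3 (2 * n).+4 = 5^-1 * (8 * n + 15)%:R * multichoose (5 / 2) n.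
Proof.
have pair_sum i : binsum 2 (2 * i + 2) + binsum 2 ((2 * i).+1 + 2)
    = 4 * multichoose (5 / 2) i - multichoose (3 / 2) i.
  rewrite !addn2 -[binsum 2 (2 * i).+2](addrK (binsum 1 (2 * i).+2)).
  by rewrite -binsum_pascal binsum2_odd binsum1_even; ring.
rewrite (_ : (2 * n).+4 = 2 * n.+1 + 2)%N; last by rewrite addn2 mulnS.
rewrite binsum_pair_sum; under eq_bigr do rewrite pair_sum.
rewrite sumrB -mulr_sumr !sum_multichoose -(half_shift 3).
by rewrite (multichoose_shift _ (half_neq0 4)); field.
Qed.

Lemma binsum3_odd n :
  binsum 3 (2 * n).+3 = 5^-1 * (8 * n + 5)%:R * multichoose (5 / 2) n.
Proof.
apply: (addIr (binsum 2 (2 * n).+3)).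
by rewrite -binsum_pascal binsum3_even binsum2_odd; field.
Qed.

End BinomialSums.

Theorem mainTheorem2 (nu : nat) :
  [/\ \sum_(k < (2 * nu).+1) (-1) ^+ k * ('C((2 * nu + 2)%N, (k + 2)%N))%:R
          * (2%:R ^- k) * ('C((2 * k)%N, k))%:R
        = 3%:R^-1 * ((4 * nu + 3)%N)%:R * (poch (3%:R / 2%:R) nu / poch 1 nu) :> rat,
      \sum_(k < (2 * nu + 1).+1) (-1) ^+ k * ('C((2 * nu + 3)%N, (k + 2)%N))%:R
          * (2%:R ^- k) * ('C((2 * k)%N, k))%:R
        = 2%:R * (poch (5%:R / 2%:R) nu / poch 1 nu) :> rat,
      \sum_(k < (2 * nu).+1) (-1) ^+ k * ('C((2 * nu + 3)%N, (k + 3)%N))%:R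
          * (2%:R ^- k) * ('C((2 * k)%N, k))%:R
        = 5%:R^-1 * ((8 * nu + 5)%N)%:R * (poch (5%:R / 2%:R) nu / poch 1 nu) :> rat
    & \sum_(k < (2 * nu + 1).+1) (-1) ^+ k * ('C((2 * nu + 4)%N, (k + 3)%N))%:R
          * (2%:R ^- k) * ('C((2 * k)%N, k))%:R
        = 5%:R^-1 * ((8 * nu + 15)%N)%:R * (poch (5%:R / 2%:R) nu / poch 1 nu) :> rat].
Proof.
rewrite addn1 !(addn2 (2 * nu)) !(addn3 (2 * nu)) addn4 !binsumE; try lia.
by split; [apply: binsum2_even | apply: binsum2_odd | apply: binsum3_odd | apply: binsum3_even].
Qed.
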